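(* Let $K$ be an algebraically closed field, $\mathcal{T}$ a $\operatorname{Hom}$-finite Krull–Schmidt triangulated $K$-category with Jacobson radical $\mathcal{J}$, and $\mathcal{I}$ a functorially finite ideal. Let $X$ and $Z$ be indecomposable and $Y=\coprod_{i=1}^nY_i^{m_i}$ with $Y_i$ indecomposable and $Y_i\not\cong Y_j$ for $i\neq j$. (1) A morphism $f=(f_{ij})^t:X\to Y$, with components $f_{ij}:X\to Y_i$ ($1\le j\le m_i$) lying in $\mathcal{I}$, is an $\mathcal{I}$-source map provided (i) for each $i$, the classes $\bar f_{i1},\dots,\bar f_{im_i}$ form a basis of $\operatorname{Irr}^-_{\mathcal{I}}(X,Y_i)$, and (ii) whenever $\operatorname{Irr}^-_{\mathcal{I}}(X,Y')\neq0$ with $Y'$ indecomposable, $Y'\cong Y_i$ for some $i$. (2) A morphism $g=(g_{ij}):Y\to Z$, with components $g_{ij}:Y_i\to Z$ lying in $\mathcal{I}$, is an $\mathcal{I}$-sink map provided (i) for each $i$, the classes $\bar g_{i1},\dots,\bar g_{im_i}$ form a basis of $\operatorname{Irr}^+_{\mathcal{I}}(Y_i,Z)$, and (ii) whenever $\operatorname{Irr}^+_{\mathcal{I}}(Y',Z)\neq0$ with $Y'$ indecomposable, $Y'\cong Y_i$ for some $i$.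
   Context: Composition of $b$ then $a$ is $ab$. An ideal: subgroups $\mathcal{I}(X,Y)\subseteq\operatorname{Hom}(X,Y)$ closed under composition; functorially finite if every object has left and right $\mathcal{I}$-approximations (morphisms of $\mathcal{I}$ starting/ending at the object through which all such morphisms of $\mathcal{I}$ factor). For ideals $\mathcal{A},\mathcal{B}$, $\mathcal{A}\mathcal{B}$ is the ideal of finite sums of composites $ab$, $a\in\mathcal{A}$, $b\in\mathcal{B}$. For indecomposable $A,B$: $\operatorname{Irr}^-_{\mathcal{I}}(A,B)=\mathcal{I}(A,B)/(\mathcal{J}\mathcal{I})(A,B)$ and $\operatorname{Irr}^+_{\mathcal{I}}(A,B)=\mathcal{I}(A,B)/(\mathcal{I}\mathcal{J})(A,B)$. An $\mathcal{I}$-source map is a left minimal left $\mathcal{I}$-approximation ($f$ left minimal: $gf=f$ implies $g$ invertible); an $\mathcal{I}$-sink map is a right minimal right $\mathcal{I}$-approximation. *)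

From HB Require Import structures.
From mathcomp Require Export all_boot all_algebra.
Set Implicit Arguments. Unset Strict Implicit. Unset Printing Implicit Defensive.
Import GRing.Theory.
Local Open Scope ring_scope.

(* Convention of the paper: [comp a b] is "b then a" (written ab). *)
Record KCat (K : fieldType) := {
  obj :> Type;
  hom : obj -> obj -> vectType K;
  comp : forall X Y Z : obj, hom Y Z -> hom X Y -> hom X Z;
  idm : forall X : obj, hom X X;
  compA : forall (X Y Z W : obj) (h : hom Z W) (g : hom Y Z) (f : hom X Y),
      comp h (comp g f) = comp (comp h g) f;
  comp1m : forall (X Y : obj) (f : hom X Y), comp (idm Y) f = f;
  compm1 : forall (X Y : obj) (f : hom X Y), comp f (idm X) = f;
  comp_linl : forall (X Y Z : obj) (f : hom X Y) (a : K) (g g' : hom Y Z),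
      comp (a *: g + g') f = a *: comp g f + comp g' f;
  comp_linr : forall (X Y Z : obj) (g : hom Y Z) (a : K) (f f' : hom X Y),
      comp g (a *: f + f') = a *: comp g f + comp g f'
}.
Arguments hom {K} C X Y : rename.
Arguments comp {K C X Y Z} g f : rename.
Arguments idm {K C} X : rename.

Section Notions.
Variables (K : fieldType) (C : KCat K).

Definition invertible (X Y : C) (f : hom C X Y) : Prop :=
  exists g : hom C Y X, comp g f = idm X /\ comp f g = idm Y.

Definition iso (X Y : C) : Prop := exists f : hom C X Y, invertible f.

Definition biproduct (T : finType) (A : T -> C) (X : C)
    (inj : forall t, hom C (A t) X) (prj : forall t, hom C X (A t)) : Prop :=
  [/\ forall t, comp (prj t) (inj t) = idm (A t),
      forall t t', t != t' -> comp (prj t) (inj t') = 0 &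
      \sum_(t : T) comp (inj t) (prj t) = idm X].
Arguments biproduct {T} A X inj prj.

(* additive: all finite biproducts exist (incl. a zero object, n = 0) *)
Definition additive : Prop :=
  forall (n : nat) (A : 'I_n -> C), exists (X : C)
    (inj : forall t, hom C (A t) X) (prj : forall t, hom C X (A t)),
    biproduct A X inj prj.

Definition local_end (X : C) : Prop :=
  idm X <> 0 /\ forall e : hom C X X, invertible e \/ invertible (idm X - e).

Definition krull_schmidt : Prop :=
  forall X : C, exists (n : nat) (A : 'I_n -> C)
    (inj : forall t, hom C (A t) X) (prj : forall t, hom C X (A t)),
    biproduct A X inj prj /\ forall t, local_end (A t).

Definition indecomposable (X : C) : Prop :=
  idm X <> 0 /\
  forall (A B : C) (i1 : hom C A X) (i2 : hom C B X) (p1 : hom C X A)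
         (p2 : hom C X B),
    comp p1 i1 = idm A -> comp p2 i2 = idm B ->
    comp p1 i2 = 0 -> comp p2 i1 = 0 ->
    comp i1 p1 + comp i2 p2 = idm X ->
    idm A = 0 \/ idm B = 0.

Definition morph_class := forall X Y : C, hom C X Y -> Prop.

Definition is_ideal (I : morph_class) : Prop :=
  [/\ forall X Y : C, I X Y 0,
      forall (X Y : C) (f g : hom C X Y), I X Y f -> I X Y g -> I X Y (f - g),
      forall (X Y Z : C) (g : hom C Y Z) (f : hom C X Y), I X Y f -> I X Z (comp g f) &
      forall (X Y Z : C) (g : hom C Y Z) (f : hom C X Y), I Y Z g -> I X Z (comp g f)].

Definition rad : morph_class :=
  fun X Y f => forall g : hom C Y X, invertible (idm X - comp g f).

(* product ideal AB: finite sums of composites ab with a in A, b in B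
   (b first, then a) *)
Definition prod_ideal (A B : morph_class) : morph_class :=
  fun X Y h => exists (n : nat) (W : 'I_n -> C)
    (a : forall k, hom C (W k) Y) (b : forall k, hom C X (W k)),
    [/\ forall k, A _ _ (a k), forall k, B _ _ (b k) &
        h = \sum_(k < n) comp (a k) (b k)].

Definition left_approx (I : morph_class) (X Y : C) (f : hom C X Y) : Prop :=
  I X Y f /\ forall (W : C) (h : hom C X W), I X W h ->
    exists u : hom C Y W, h = comp u f.

Definition right_approx (I : morph_class) (Y X : C) (g : hom C Y X) : Prop :=
  I Y X g /\ forall (W : C) (h : hom C W X), I W X h ->
    exists u : hom C W Y, h = comp g u.

Definition functorially_finite (I : morph_class) : Prop :=
  forall X : C,
    (exists (Y : C) (f : hom C X Y), left_approx I f) /\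
    (exists (Y : C) (g : hom C Y X), right_approx I g).

Definition left_minimal (X Y : C) (f : hom C X Y) : Prop :=
  forall g : hom C Y Y, comp g f = f -> invertible g.

Definition right_minimal (Y Z : C) (g : hom C Y Z) : Prop :=
  forall h : hom C Y Y, comp g h = g -> invertible h.

Definition source_map (I : morph_class) (X Y : C) (f : hom C X Y) : Prop :=
  left_approx I f /\ left_minimal f.

Definition sink_map (I : morph_class) (Y Z : C) (g : hom C Y Z) : Prop :=
  right_approx I g /\ right_minimal g.

(* Irr^-_I = I / (J I),  Irr^+_I = I / (I J) *)
Definition irr_minus_rel (I : morph_class) : morph_class := prod_ideal rad I.
Definition irr_plus_rel (I : morph_class) : morph_class := prod_ideal I rad.

Definition quot_nonzero (I N : morph_class) (X Y : C) : Prop :=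
  exists h : hom C X Y, I X Y h /\ ~ N X Y h.

(* the classes of f_1..f_m (elements of I(X,Y)) form a K-basis of the
   quotient space I(X,Y)/N(X,Y): they span it and are linearly independent
   modulo N(X,Y). *)
Definition quot_basis (I N : morph_class) (X Y : C) (m : nat)
    (f : 'I_m -> hom C X Y) : Prop :=
  (forall h : hom C X Y, I X Y h ->
     exists c : 'I_m -> K, N X Y (h - \sum_(j < m) c j *: f j)) /\
  (forall c : 'I_m -> K, N X Y (\sum_(j < m) c j *: f j) ->
     forall j, c j = 0).

End Notions.
Arguments biproduct {K C T} A X inj prj.
Arguments quot_basis {K C} I N {X Y} m f.

Record triangulated (K : fieldType) (C : KCat K) := {
  shift : C -> C;
  shiftm : forall X Y : C, hom C X Y -> hom C (shift X) (shift Y);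
  shiftm_lin : forall (X Y : C) (a : K) (f g : hom C X Y),
      shiftm (a *: f + g) = a *: shiftm f + shiftm g;
  shiftm_comp : forall (X Y Z : C) (g : hom C Y Z) (f : hom C X Y),
      shiftm (comp g f) = comp (shiftm g) (shiftm f);
  shiftm_id : forall X : C, shiftm (idm X) = idm (shift X);
  shift_ff : forall X Y : C, bijective (@shiftm X Y);
  shift_es : forall Y : C, exists X : C, iso (shift X) Y;
  dist : forall X Y Z : C, hom C X Y -> hom C Y Z -> hom C Z (shift X) -> Prop;
  TR1_iso : forall (X Y Z X' Y' Z' : C) (f : hom C X Y) (g : hom C Y Z)
      (h : hom C Z (shift X)) (f' : hom C X' Y') (g' : hom C Y' Z')
      (h' : hom C Z' (shift X')) (a : hom C X X') (b : hom C Y Y')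
      (c : hom C Z Z'),
      invertible a -> invertible b -> invertible c ->
      comp b f = comp f' a -> comp c g = comp g' b ->
      comp (shiftm a) h = comp h' c ->
      dist f g h -> dist f' g' h';
  TR1_id : forall X Z : C, idm Z = 0 ->
      dist (idm X) (0 : hom C X Z) (0 : hom C Z (shift X));
  TR1_ext : forall (X Y : C) (f : hom C X Y),
      exists (Z : C) (g : hom C Y Z) (h : hom C Z (shift X)), dist f g h;
  TR2 : forall (X Y Z : C) (f : hom C X Y) (g : hom C Y Z)
      (h : hom C Z (shift X)), dist f g h <-> dist g h (- shiftm f);
  TR3 : forall (X Y Z X' Y' Z' : C) (f : hom C X Y) (g : hom C Y Z)
      (h : hom C Z (shift X)) (f' : hom C X' Y') (g' : hom C Y' Z')
      (h' : hom C Z' (shift X')) (a : hom C X X') (b : hom C Y Y'),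
      dist f g h -> dist f' g' h' -> comp b f = comp f' a ->
      exists c : hom C Z Z',
        comp c g = comp g' b /\ comp (shiftm a) h = comp h' c;
  TR4 : forall (X Y Z Z' X' Y' : C) (f : hom C X Y) (g : hom C Y Z)
      (f2 : hom C Y Z') (f3 : hom C Z' (shift X))
      (g2 : hom C Z X') (g3 : hom C X' (shift Y))
      (h2 : hom C Z Y') (h3 : hom C Y' (shift X)),
      dist f f2 f3 -> dist g g2 g3 -> dist (comp g f) h2 h3 ->
      exists (u : hom C Z' Y') (v : hom C Y' X'),
        [/\ dist u v (comp (shiftm f2) g3),
            comp u f2 = comp h2 g, comp h3 u = f3,
            comp v h2 = g2 & comp g3 v = comp (shiftm f) h3]
}.

(* Let a : X -> A be any left I-approximation.  Every h : X -> V in I with V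
   indecomposable lies in Hom(Y, V) f + J(A, V) a: if Irr^-_I(X, V) = 0 then
   h is in J I, and every morphism of J I factors as (radical) o a; otherwise
   V is isomorphic to some Y_i, and modulo J I the morphism h is a combination
   of the f_ij.  Applied to the indecomposable components of a itself this
   gives a = u f + r a with r radical, so a = (1 - r)^-1 u f factors through f,
   and f is a left I-approximation.
   For minimality let g f = f and u = 1 - g.  As K is algebraically closed and
   the Y_i have local endomorphism rings and are pairwise non-isomorphic, every
   morphism Y -> Y_i is a scalar combination of the projections onto the copies
   of Y_i plus a radical morphism.  For a row of u this combination is killed
   by f, so by the independence of the f_ij modulo J I the scalars vanish; thus
   u is radical and g = 1 - u is invertible.
   The sink-map half is the source-map half in the opposite category. *)
From HB Require Import structures.
From Pilot Require Import Defs.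
From Stdlib Require Import Classical.

Set Implicit Arguments. Unset Strict Implicit. Unset Printing Implicit Defensive.
Import GRing.Theory.
Local Open Scope ring_scope.

Section Bilinearity.
Variables (K : fieldType) (C : KCat K).
Implicit Types X Y Z : C.

Lemma compDm X Y Z (f : hom C X Y) (g g' : hom C Y Z) :
  comp (g + g') f = comp g f + comp g' f.
Proof. by have := comp_linl f 1 g g'; rewrite !scale1r. Qed.

Lemma compmD X Y Z (g : hom C Y Z) (f f' : hom C X Y) :
  comp g (f + f') = comp g f + comp g f'.
Proof. by have := comp_linr g 1 f f'; rewrite !scale1r. Qed.

Lemma comp0m X Y Z (f : hom C X Y) : comp (0 : hom C Y Z) f = 0.
Proof. by apply/(addrI (comp 0 f)); rewrite -compDm !addr0. Qed.

Lemma compm0 X Y Z (g : hom C Y Z) : comp g (0 : hom C X Y) = 0.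
Proof. by apply/(addrI (comp g 0)); rewrite -compmD !addr0. Qed.

Lemma compZm X Y Z (f : hom C X Y) a (g : hom C Y Z) :
  comp (a *: g) f = a *: comp g f.
Proof. by have := comp_linl f a g 0; rewrite !addr0 comp0m addr0. Qed.

Lemma compmZ X Y Z (g : hom C Y Z) a (f : hom C X Y) :
  comp g (a *: f) = a *: comp g f.
Proof. by have := comp_linr g a f 0; rewrite !addr0 compm0 addr0. Qed.

Lemma compNm X Y Z (f : hom C X Y) (g : hom C Y Z) : comp (- g) f = - comp g f.
Proof. by rewrite -scaleN1r compZm scaleN1r. Qed.

Lemma compmN X Y Z (g : hom C Y Z) (f : hom C X Y) : comp g (- f) = - comp g f.
Proof. by rewrite -scaleN1r compmZ scaleN1r. Qed.

Lemma compBm X Y Z (f : hom C X Y) (g g' : hom C Y Z) :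
  comp (g - g') f = comp g f - comp g' f.
Proof. by rewrite compDm compNm. Qed.

Lemma compmB X Y Z (g : hom C Y Z) (f f' : hom C X Y) :
  comp g (f - f') = comp g f - comp g f'.
Proof. by rewrite compmD compmN. Qed.

Lemma comp_summ X Y Z (f : hom C X Y) (J : Type) (r : seq J) (P : pred J)
    (F : J -> hom C Y Z) :
  comp (\sum_(j <- r | P j) F j) f = \sum_(j <- r | P j) comp (F j) f.
Proof. exact: (big_morph (comp^~ f) (compDm f) (comp0m _ f)). Qed.

Lemma compm_sum X Y Z (g : hom C Y Z) (J : Type) (r : seq J) (P : pred J)
    (F : J -> hom C X Y) :
  comp g (\sum_(j <- r | P j) F j) = \sum_(j <- r | P j) comp g (F j).
Proof. exact: (big_morph (comp g) (compmD g) (compm0 _ g)). Qed.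

End Bilinearity.

Section Invertibility.
Variables (K : fieldType) (C : KCat K).
Implicit Types X Y Z : C.

Lemma invertible_idm X : invertible (idm X).
Proof. by exists (idm X); rewrite comp1m. Qed.

Lemma invertible_comp X Y Z (f : hom C X Y) (g : hom C Y Z) :
  invertible f -> invertible g -> invertible (comp g f).
Proof.
move=> [f' [f'f ff']] [g' [g'g gg']]; exists (comp f' g'); split.
  by rewrite compA -(compA f') g'g compm1.
by rewrite compA -(compA g) ff' compm1.
Qed.

Lemma iso_sym X Y : iso X Y -> iso Y X.
Proof. by case=> f [g [gf fg]]; exists g, f. Qed.

Lemma idem_invertible_eq1 X (e : hom C X X) :
  comp e e = e -> invertible e -> e = idm X.
Proof. by move=> ee [w [we _]]; rewrite -we -{2}ee compA we comp1m. Qed.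

Lemma local_indecomposable X : local_end X -> indecomposable X.
Proof.
move=> [X0 Xloc]; split=> // A B i1 i2 p1 p2 p1i1 p2i2 p1i2 p2i1 sum1.
have idem1 : comp (comp i1 p1) (comp i1 p1) = comp i1 p1.
  by rewrite compA -(compA i1) p1i1 compm1.
have idem2 : comp (comp i2 p2) (comp i2 p2) = comp i2 p2.
  by rewrite compA -(compA i2) p2i2 compm1.
have compl1 : idm X - comp i1 p1 = comp i2 p2 by rewrite -sum1 addrC addKr.
have idm_eq0 U (i : hom C U X) p : comp p i = idm U -> comp i p = 0 -> idm U = 0.
  move=> pi ip0; rewrite -pi -[comp p i]compm1 -pi -compA (compA i) ip0.
  by rewrite comp0m compm0.
case: (Xloc (comp i1 p1)) => [/(idem_invertible_eq1 idem1) e1|].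
  by right; apply: (idm_eq0 _ _ _ p2i2); rewrite -compl1 e1 subrr.
rewrite compl1 => /(idem_invertible_eq1 idem2) e2.
by left; apply: (idm_eq0 _ _ _ p1i1); apply: (addIr (idm X)); rewrite add0r -{1}e2.
Qed.

Lemma split_mono_local_invertible U V (h : hom C U V) (k : hom C V U) :
  local_end V -> idm U <> 0 -> comp k h = idm U -> invertible h.
Proof.
move=> [_ Vloc] U0 kh.
have idem : comp (comp h k) (comp h k) = comp h k.
  by rewrite compA -(compA h) kh compm1.
case: (Vloc (comp h k)) => [/(idem_invertible_eq1 idem) hk|[w [w1 _]]].
  by exists k.
have h0 : h = 0.
  rewrite -[h]comp1m -w1 -compA compBm comp1m -compA kh compm1 subrr.
  exact: compm0.
by case: U0; rewrite -kh h0 compm0.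
Qed.

Lemma invertible_conj Y A (i : hom C A Y) (p : hom C Y A) (e : hom C Y Y) :
  comp i p = idm Y -> invertible (comp p (comp e i)) -> invertible e.
Proof.
move=> ip [w [w1 w2]]; exists (comp i (comp w p)); split.
  rewrite -[e in LHS]compm1 -ip.
  have -> : comp (comp i (comp w p)) (comp e (comp i p)) =
            comp i (comp (comp w (comp p (comp e i))) p) by rewrite !compA.
  by rewrite w1 comp1m.
rewrite -[e in LHS]comp1m -ip.
have -> : comp (comp (comp i p) e) (comp i (comp w p)) =
          comp i (comp (comp (comp p (comp e i)) w) p) by rewrite !compA.
by rewrite w2 comp1m.
Qed.

End Invertibility.

Section Biproduct.
Variables (K : fieldType) (C : KCat K) (T : finType) (A : T -> C) (B : C).
Variables (inj : forall t, hom C (A t) B) (prj : forall t, hom C B (A t)).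

Lemma prj_sum_inj :
  (forall t, comp (prj t) (inj t) = idm (A t)) ->
  (forall t t', t != t' -> comp (prj t) (inj t') = 0) ->
  forall W (x : forall t, hom C W (A t)) t,
    comp (prj t) (\sum_t' comp (inj t') (x t')) = x t.
Proof.
move=> pi1 pi0 W x t; rewrite compm_sum (bigD1 t) //= big1 ?addr0.
  by rewrite compA pi1 comp1m.
by move=> t' t't; rewrite compA pi0 1?eq_sym // comp0m.
Qed.

Hypothesis HB : biproduct A B inj prj.

Lemma biproduct_decl W (h : hom C W B) : h = \sum_t comp (inj t) (comp (prj t) h).
Proof.
case: HB => _ _ sum1; rewrite -[h in LHS]comp1m -sum1 comp_summ.
by apply: eq_bigr => t _; rewrite compA.
Qed.

Lemma biproduct_decr W (h : hom C B W) : h = \sum_t comp (comp h (inj t)) (prj t).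
Proof.
case: HB => _ _ sum1; rewrite -[h in LHS]compm1 -sum1 compm_sum.
by apply: eq_bigr => t _; rewrite compA.
Qed.

End Biproduct.

Section KrullSchmidt.
Variables (K : fieldType) (C : KCat K).

Lemma biproduct_split_first n (A : 'I_n.+1 -> C) (Y : C)
    (inj : forall t, hom C (A t) Y) (prj : forall t, hom C Y (A t)) :
  Defs.additive C -> biproduct A Y inj prj ->
  exists (B : C) (i2 : hom C B Y) (p2 : hom C Y B),
    [/\ comp p2 i2 = idm B, comp (prj ord0) i2 = 0, comp p2 (inj ord0) = 0 &
        comp (inj ord0) (prj ord0) + comp i2 p2 = idm Y].
Proof.
move=> Hadd [pi1 pi0 sum1].
have [B [inj' [prj' [pi1' pi0' sum1']]]] := Hadd n (fun s => A (lift ord0 s)).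
exists B, (\sum_s comp (inj (lift ord0 s)) (prj' s)),
  (\sum_s comp (inj' s) (prj (lift ord0 s))); split.
- have pi0_lift s s' : s != s' -> comp (prj (lift ord0 s)) (inj (lift ord0 s')) = 0.
    by move=> ss'; apply: pi0; rewrite (inj_eq (@lift_inj _ ord0)).
  rewrite -sum1' comp_summ; apply: eq_bigr => s _.
  by rewrite -compA (prj_sum_inj (fun s => pi1 (lift ord0 s)) pi0_lift).
- by rewrite compm_sum big1 // => s _; rewrite compA pi0 ?comp0m.
- by rewrite comp_summ big1 // => s _; rewrite -compA pi0 ?compm0.
- rewrite -sum1 big_ord_recl comp_summ; congr (_ + _).
  by apply: eq_bigr => s _; rewrite -compA (prj_sum_inj pi1' pi0').
Qed.

Lemma indecomposable_local : Defs.additive C -> krull_schmidt C ->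
  forall Y : C, indecomposable Y -> local_end Y.
Proof.
move=> Hadd HKS Y [Y0 Yindec].
have [[|n] [A [inj [prj [HY Aloc]]]]] := HKS Y.
  by case: Y0; case: HY => _ _ <-; rewrite big_ord0.
have [B [i2 [p2 [p2i2 p1i2 p2i1 sum1]]]] := biproduct_split_first Hadd HY.
have [pi1 _ _] := HY.
have [A0|B0] := Yindec _ _ _ _ _ _ (pi1 ord0) p2i2 p1i2 p2i1 sum1.
  by case: (Aloc ord0).
have ip1 : comp (inj ord0) (prj ord0) = idm Y.
  by rewrite -sum1 -[i2]compm1 B0 compm0 comp0m addr0.
split=> // e; case: (Aloc ord0) => _ /(_ (comp (prj ord0) (comp e (inj ord0)))).
case=> [einv|e'inv]; [left|right]; first exact: invertible_conj ip1 einv.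
by apply: invertible_conj ip1 _; rewrite compBm comp1m compmB pi1.
Qed.

End KrullSchmidt.

Section Radical.
Variables (K : fieldType) (C : KCat K).
Implicit Types X Y Z : C.

Lemma radMl X Y Z (k : hom C Y Z) (f : hom C X Y) : rad f -> rad (comp k f).
Proof. by move=> radf g; rewrite compA; apply: radf. Qed.

Lemma invertible_1subC X Y (a : hom C X Y) (b : hom C Y X) :
  invertible (idm X - comp b a) -> invertible (idm Y - comp a b).
Proof.
move=> [w [w1 w2]].
have wb1 : comp (comp w b) (idm Y - comp a b) = b.
  have -> : comp (comp w b) (idm Y - comp a b) =
            comp (comp w (idm X - comp b a)) b.
    by rewrite !compmB compBm !compm1 !compA.
  by rewrite w1 comp1m.
have wb2 : comp (idm X - comp b a) (comp w b) = b by rewrite compA w2 comp1m.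
exists (idm Y + comp a (comp w b)); split.
  by rewrite compDm comp1m -compA wb1 subrK.
rewrite compmD compm1.
have -> : comp (idm Y - comp a b) (comp a (comp w b)) =
          comp a (comp (idm X - comp b a) (comp w b)).
  by rewrite !compBm compmB !comp1m -!compA.
by rewrite wb2 subrK.
Qed.

Lemma radMr X Y Z (f : hom C Y Z) (h : hom C X Y) : rad f -> rad (comp f h).
Proof. by move=> radf g; rewrite compA; apply: invertible_1subC; rewrite compA. Qed.

Lemma rad0 X Y : rad (0 : hom C X Y).
Proof. by move=> g; rewrite compm0 subr0; apply: invertible_idm. Qed.

Lemma radD X Y (f f' : hom C X Y) : rad f -> rad f' -> rad (f + f').
Proof.
move=> radf radf' g; have [w [w1 w2]] := radf g.
have -> : idm X - comp g (f + f') =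
          comp (idm X - comp g f) (idm X - comp (comp w g) f').
  by rewrite compmB compm1 !compA w2 comp1m compmD opprD addrA.
exact: invertible_comp (radf' (comp w g)) (radf g).
Qed.

Lemma radN X Y (f : hom C X Y) : rad f -> rad (- f).
Proof. by move=> radf g; rewrite compmN -compNm; apply: radf. Qed.

Lemma rad_sum X Y (J : Type) (r : seq J) (P : pred J) (F : J -> hom C X Y) :
  (forall j, P j -> rad (F j)) -> rad (\sum_(j <- r | P j) F j).
Proof. by move=> radF; apply: big_ind => //; [exact: rad0 | exact: radD]. Qed.

Lemma rad_invertible_1sub X (f : hom C X X) : rad f -> invertible (idm X - f).
Proof. by move=> /(_ (idm X)); rewrite comp1m. Qed.

Lemma rad_nonunit X (e : hom C X X) : local_end X -> ~ invertible e -> rad e.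
Proof.
move=> Xloc e_noninv k; case: (Xloc) => X0 /(_ (comp k e)) [[w [w1 _]]|//].
case: e_noninv; apply: (split_mono_local_invertible (k := comp w k)) => //.
by rewrite -compA.
Qed.

Lemma rad_noniso U V (h : hom C U V) :
  local_end U -> local_end V -> ~ iso U V -> rad h.
Proof.
move=> Uloc Vloc noniso k; case: (Uloc) => U0 /(_ (comp k h)) [[w [w1 _]]|//].
case: noniso; exists h; apply: (split_mono_local_invertible (k := comp w k)) => //.
by rewrite -compA.
Qed.

End Radical.

Section Ideal.
Variables (K : fieldType) (C : KCat K) (I : morph_class C).
Arguments I : clear implicits.
Hypothesis HI : is_ideal I.
Implicit Types X Y Z : C.

Lemma ideal0 X Y : I X Y 0.
Proof. by case: HI. Qed.

Lemma idealMl X Y Z (g : hom C Y Z) (h : hom C X Y) : I X Y h -> I X Z (comp g h).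
Proof. by case: HI => _ _ + _; apply. Qed.

Lemma idealD X Y (g h : hom C X Y) : I X Y g -> I X Y h -> I X Y (g + h).
Proof.
case: HI => _ IB _ _ Ig Ih.
by have := IB _ _ _ _ Ig (IB _ _ _ _ (ideal0 X Y) Ih); rewrite sub0r opprK.
Qed.

Lemma ideal_sum X Y (J : Type) (r : seq J) (P : pred J) (F : J -> hom C X Y) :
  (forall j, P j -> I X Y (F j)) -> I X Y (\sum_(j <- r | P j) F j).
Proof. by move=> IF; apply: big_ind => //; [exact: ideal0 | exact: idealD]. Qed.

Lemma irr_minus_rel_comp X V Y (a : hom C V Y) (b : hom C X V) :
  rad a -> I X V b -> irr_minus_rel I (comp a b).
Proof.
by move=> rada Ib; exists 1%N, (fun _ => V), (fun _ => a), (fun _ => b); rewrite big_ord1.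
Qed.

End Ideal.

Section Eigenvector.
Import VectorInternalTheory.
Variables (K : closedFieldType) (C : KCat K) (Y : C) (e : hom C Y Y).
Local Notation d := (dim (hom C Y Y)).

Definition comp_rV (r : 'rV[K]_d) : 'rV[K]_d := v2r (comp e (r2v r)).

Fact comp_rV_is_linear : linear comp_rV.
Proof. by move=> a u v; rewrite /comp_rV linearP comp_linr linearP. Qed.

HB.instance Definition _ := GRing.isLinear.Build K _ _ _ comp_rV comp_rV_is_linear.

Lemma eigenvector_exists : idm Y <> 0 ->
  exists (l : K) (x : hom C Y Y), x != 0 /\ comp e x = l *: x.
Proof.
move=> Y0; have d_gt0 : (0 < d)%N.
  rewrite lt0n; apply: contra_notN Y0 => /eqP d0.
  have -> : idm Y = r2v 0.
    rewrite -[LHS]v2rK; congr r2v; apply/rowP => i.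
    by move: (ltn_ord i); rewrite [X in (_ < X)%N]d0.
  exact: linear0.
have /closed_rootP [a] : size (char_poly (lin1_mx comp_rV)) != 1%N.
  by rewrite size_char_poly; case: (d) d_gt0.
rewrite -eigenvalue_root_char => /eigenvalueP [v vL v0].
exists a, (r2v v); split.
  by apply: contraNneq v0 => v0; rewrite -(r2vK v) v0 linear0.
by apply: v2r_inj; rewrite linearZ /= -[v2r _]/(comp_rV v) -mul_rV_lin1 vL r2vK.
Qed.

End Eigenvector.

Lemma local_end_scalar_rad (K : closedFieldType) (C : KCat K) (V : C)
    (e : hom C V V) :
  local_end V -> exists l : K, rad (e - l *: idm V).
Proof.
move=> Vloc; have [l [x [x0 ex]]] := eigenvector_exists e Vloc.1.
exists l; apply: rad_nonunit => // -[w [w1 _]]; move/eqP: x0; apply.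
by rewrite -[x]comp1m -w1 -compA compBm compZm comp1m ex subrr compm0.
Qed.

Section SourceMap.
Local Unset Implicit Arguments.
Variables (K : closedFieldType) (C : KCat K) (HKS : krull_schmidt C).
Variables (I : morph_class C) (HI : is_ideal I).
Hypothesis left_approx_exists :
  forall X : C, exists (A : C) (a : hom C X A), left_approx I a.
Variables (n : nat) (Yi : 'I_n -> C) (m : 'I_n -> nat) (Y : C).
Variable inj : forall t : {i : 'I_n & 'I_(m i)}, hom C (Yi (tag t)) Y.
Variable prj : forall t : {i : 'I_n & 'I_(m i)}, hom C Y (Yi (tag t)).
Hypothesis Yi_local : forall i, local_end (Yi i).
Hypothesis Yi_noniso : forall i j, i != j -> ~ iso (Yi i) (Yi j).
Hypothesis HY : biproduct (fun t => Yi (tag t)) Y inj prj.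
Let pr {i} (j : 'I_(m i)) : hom C Y (Yi i) := prj (Tagged (fun i => 'I_(m i)) j).

Section ProjectionCombination.
Variable i : 'I_n.

Definition proj_comb_mod_rad (h : hom C Y (Yi i)) : Prop :=
  exists (mu : 'I_(m i) -> K) (r : hom C Y (Yi i)),
    rad r /\ h = \sum_j mu j *: pr j + r.

Lemma proj_comb_mod_rad0 : proj_comb_mod_rad 0.
Proof.
exists (fun _ => 0), 0; split; first exact: rad0.
by rewrite addr0 big1 // => j _; rewrite scale0r.
Qed.

Lemma proj_comb_mod_radD h h' :
  proj_comb_mod_rad h -> proj_comb_mod_rad h' -> proj_comb_mod_rad (h + h').
Proof.
move=> [mu [r [radr ->]]] [mu' [r' [radr' ->]]].
exists (fun j => mu j + mu' j), (r + r'); split; first exact: radD.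
by rewrite addrACA -big_split; congr (_ + _); apply: eq_bigr => j _; rewrite scalerDl.
Qed.

Lemma proj_comb_mod_rad_comp_pr i' (j : 'I_(m i')) (D : hom C (Yi i') (Yi i)) :
  proj_comb_mod_rad (comp D (pr j)).
Proof.
case: (eqVneq i' i) => [eq_i'i|i'i]; last first.
  exists (fun _ => 0), (comp D (pr j)); split.
    exact: radMr (rad_noniso D (Yi_local i') (Yi_local i) (Yi_noniso i' i i'i)).
  by rewrite big1 ?add0r // => k _; rewrite scale0r.
subst i'; have [l radDl] := local_end_scalar_rad D (Yi_local i).
exists (fun k => if k == j then l else 0), (comp (D - l *: idm _) (pr j)).
split; first exact: radMr.
rewrite (bigD1 j) //= eqxx big1 ?addr0 => [|k kj]; last by rewrite (negbTE kj) scale0r.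
by rewrite compBm compZm comp1m addrC subrK.
Qed.

Lemma proj_comb_mod_radP (h : hom C Y (Yi i)) : proj_comb_mod_rad h.
Proof.
rewrite (biproduct_decr HY h).
apply: big_ind => [|h1 h2|t _]; first exact: proj_comb_mod_rad0.
  exact: proj_comb_mod_radD.
by case: t => i' j; apply: proj_comb_mod_rad_comp_pr.
Qed.

End ProjectionCombination.

Variables (X : C) (f : hom C X Y).
Hypothesis f_in_I : forall i (j : 'I_(m i)), I X (Yi i) (comp (pr j) f).
Hypothesis f_basis : forall i,
  quot_basis I (irr_minus_rel I) (X:=X) (Y:=Yi i) (m i) (fun j => comp (pr j) f).
Hypothesis f_irr_complete : forall Y' : C, indecomposable Y' ->
  quot_nonzero I (irr_minus_rel I) X Y' -> exists i, iso Y' (Yi i).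

Lemma ideal_f : I X Y f.
Proof.
rewrite (biproduct_decl HY f); apply: (ideal_sum HI) => -[i j] _.
exact/(idealMl HI)/f_in_I.
Qed.

Lemma rad_of_comp_f_eq0 i (h : hom C Y (Yi i)) : comp h f = 0 -> rad h.
Proof.
have [mu [r [radr ->]]] := proj_comb_mod_radP i h => hf0.
suff mu0 j : mu j = 0 by rewrite big1 ?add0r // => j _; rewrite mu0 scale0r.
apply: (f_basis i).2.
have -> : \sum_j mu j *: comp (pr j) f = comp (- r) f.
  apply: (addIr (comp r f)); rewrite compNm addNr -[RHS]hf0 compDm comp_summ.
  by congr (_ + _); apply: eq_bigr => k _; rewrite compZm.
exact: irr_minus_rel_comp (radN radr) ideal_f.
Qed.

Lemma f_left_minimal : left_minimal f.
Proof.
move=> g gf; have u0 : comp (idm Y - g) f = 0 by rewrite compBm comp1m gf subrr.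
have radu : rad (idm Y - g).
  rewrite (biproduct_decl HY (idm Y - g)); apply: rad_sum => t _; apply: radMl.
  by apply: rad_of_comp_f_eq0; rewrite -compA u0 compm0.
by have := rad_invertible_1sub radu; rewrite opprB addrC subrK.
Qed.

Section Approximation.
Variables (A : C) (a : hom C X A).
Hypothesis a_approx : left_approx I a.

Definition factors_mod_rad (V : C) (h : hom C X V) : Prop :=
  exists (u : hom C Y V) (r : hom C A V), rad r /\ h = comp u f + comp r a.

Lemma factors_mod_rad0 V : factors_mod_rad V 0.
Proof. by exists 0, 0; rewrite !comp0m addr0; split => //; apply: rad0. Qed.

Lemma factors_mod_radD V (h h' : hom C X V) :
  factors_mod_rad V h -> factors_mod_rad V h' -> factors_mod_rad V (h + h').
Proof.
move=> [u [r [radr ->]]] [u' [r' [radr' ->]]].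
by exists (u + u'), (r + r'); split; [exact: radD | rewrite !compDm addrACA].
Qed.

Lemma factors_mod_rad_sum V (J : Type) (s : seq J) (P : pred J) (F : J -> hom C X V) :
  (forall j, P j -> factors_mod_rad V (F j)) ->
  factors_mod_rad V (\sum_(j <- s | P j) F j).
Proof.
by move=> FP; apply: big_ind => //; [exact: factors_mod_rad0 | exact: factors_mod_radD].
Qed.

Lemma factors_mod_radMl V V' (k : hom C V V') (h : hom C X V) :
  factors_mod_rad V h -> factors_mod_rad V' (comp k h).
Proof.
move=> [u [r [radr ->]]]; exists (comp k u), (comp k r).
by split; [exact: radMl | rewrite compmD !compA].
Qed.

Lemma irr_minus_rel_factors V (h : hom C X V) :
  irr_minus_rel I h -> factors_mod_rad V h.
Proof.
move=> [k [W [b [c [radb Ic ->]]]]]; apply: factors_mod_rad_sum => l _.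
have [v ->] := a_approx.2 _ _ (Ic l).
by exists 0, (comp (b l) v); rewrite comp0m add0r compA; split; first exact: radMr.
Qed.

Lemma indecomposable_factors V (h : hom C X V) :
  indecomposable V -> I X V h -> factors_mod_rad V h.
Proof.
move=> Vindec Ih.
case: (classic (quot_nonzero I (irr_minus_rel I) X V)) => [Irr_nz|Irr0]; last first.
  by apply: irr_minus_rel_factors; apply: NNPP => hN; apply: Irr0; exists h.
have [i [phi [psi [psiphi _]]]] := f_irr_complete V Vindec Irr_nz.
have [c hc] := (f_basis i).1 _ (idealMl HI phi Ih).
rewrite -[h]comp1m -psiphi -compA; apply: factors_mod_radMl.
rewrite -[comp phi h](subrK (\sum_j c j *: comp (pr j) f)).
apply: factors_mod_radD; first exact: irr_minus_rel_factors.
exists (\sum_j c j *: pr j), 0; rewrite comp0m addr0 comp_summ; split; first exact: rad0.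
by apply: eq_bigr => j _; rewrite compZm.
Qed.

Lemma approx_factors_through_f : exists w : hom C Y A, a = comp w f.
Proof.
have [k [B [inj' [prj' [HB Bloc]]]]] := HKS A.
have [u [r [radr ar]]] : factors_mod_rad A a.
  rewrite (biproduct_decl HB a); apply: factors_mod_rad_sum => l _.
  apply/factors_mod_radMl/indecomposable_factors; first exact: local_indecomposable.
  by apply: (idealMl HI); case: a_approx.
have [w [w1 _]] := rad_invertible_1sub radr.
exists (comp w u); rewrite -compA.
have <- : comp (idm A - r) a = comp u f by rewrite compBm comp1m {1}ar addrK.
by rewrite compA w1 comp1m.
Qed.

End Approximation.

Lemma f_left_approx : left_approx I f.
Proof.
split=> [|W h Ih]; first exact: ideal_f.
have [A [a a_approx]] := left_approx_exists X.
have [v ->] := a_approx.2 _ _ Ih.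
have [w ->] := approx_factors_through_f _ _ a_approx.
by exists (comp v w); rewrite compA.
Qed.

Lemma source_map_of_irr_basis : source_map I f.
Proof. exact: (conj f_left_approx f_left_minimal). Qed.

End SourceMap.

Section Opposite.
Variables (K : fieldType) (C : KCat K).

Definition opposite : KCat K :=
  @Build_KCat K (obj C) (fun X Y => hom C Y X) (fun X Y Z g f => comp f g)
    (fun X => idm X)
    (fun X Y Z W h g f => esym (compA f g h))
    (fun X Y f => compm1 f) (fun X Y f => comp1m f)
    (fun X Y Z f a g g' => comp_linr f a g g')
    (fun X Y Z g a f f' => comp_linl g a f f').

Lemma invertible_op (X Y : C) (f : hom C Y X) :
  @invertible _ opposite X Y f <-> invertible f.
Proof. by split=> -[g [gf fg]]; exists g. Qed.

Lemma iso_op (X Y : C) : @iso _ opposite X Y <-> iso Y X.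
Proof. by split=> -[f /invertible_op finv]; exists f. Qed.

Lemma local_end_op (X : C) : @local_end _ opposite X <-> local_end X.
Proof.
split=> -[X0 Xloc]; split=> // e.
  by case: (Xloc e) => /invertible_op einv; [left|right].
by case: (Xloc e) => einv; [left|right]; apply/invertible_op.
Qed.

Lemma indecomposable_op (X : C) : @indecomposable _ opposite X <-> indecomposable X.
Proof.
by split=> -[X0 Xindec]; split=> // A B i1 i2 p1 p2 *; apply: (Xindec A B p1 p2 i1 i2);
  rewrite //= addrC.
Qed.

Lemma rad_op (X Y : C) (f : hom C Y X) : @rad _ opposite X Y f <-> rad f.
Proof.
split=> radf g; first by apply: invertible_1subC; apply/invertible_op; apply: radf.
by apply/invertible_op; apply: invertible_1subC; apply: radf.
Qed.

Lemma biproduct_op (T : finType) (A : T -> C) (X : C) inj prj :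
  biproduct A X inj prj -> @biproduct _ opposite T A X prj inj.
Proof. by case=> pi1 pi0 sum1; split=> // t t' tt'; apply: pi0; rewrite eq_sym. Qed.

Lemma krull_schmidt_op : krull_schmidt C -> krull_schmidt opposite.
Proof.
move=> HKS X; have [k [A [inj [prj [HX Aloc]]]]] := HKS X.
exists k, A, prj, inj; split; first exact: biproduct_op.
by move=> t; apply/local_end_op.
Qed.

Variable I : morph_class C.
Arguments I : clear implicits.

Definition op_class : morph_class opposite := fun X Y f => I Y X f.

Lemma is_ideal_op : is_ideal I -> is_ideal op_class.
Proof.
by case=> I0 IB IMl IMr; split=> *; [apply: I0 | apply: IB | apply: IMr | apply: IMl].
Qed.

Lemma irr_minus_rel_op (X Y : C) (h : hom C Y X) :
  @irr_minus_rel _ opposite op_class X Y h <-> irr_plus_rel I h.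
Proof.
by split=> -[k [W [a [b [rada Ib ->]]]]]; exists k, W, b, a; split=> // l; apply/rad_op.
Qed.

Lemma quot_basis_op (X Y : C) k (f : 'I_k -> hom C Y X) :
  quot_basis I (irr_plus_rel I) k f ->
  quot_basis op_class (irr_minus_rel op_class) (X:=X) (Y:=Y) k f.
Proof.
case=> fspan ffree; split=> [h /fspan [c hc]|c /irr_minus_rel_op]; last exact: ffree.
by exists c; apply/irr_minus_rel_op.
Qed.

Lemma quot_nonzero_op (X Y : C) :
  quot_nonzero op_class (irr_minus_rel op_class) X Y -> quot_nonzero I (irr_plus_rel I) Y X.
Proof. by case=> h [Ih hN]; exists h; split=> // /irr_minus_rel_op. Qed.

Lemma sink_map_of_op (Y Z : C) (g : hom C Y Z) :
  @source_map _ opposite op_class Z Y g -> sink_map I g.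
Proof. by case=> g_approx g_min; split=> // h /g_min /invertible_op. Qed.

End Opposite.

Unset Implicit Arguments.
(* [GRing.Theory] also exports a constant [additive]; make it mean
   [Defs.additive] again. *)
Import Defs.

Theorem proposition4p9 (K : closedFieldType) (C : KCat K)
  (TC : triangulated C) (Hadd : additive C) (HKS : krull_schmidt C)
  (I : morph_class C) (HI : is_ideal I) (HIff : functorially_finite I)
  (X Z : C) (HX : indecomposable X) (HZ : indecomposable Z)
  (n : nat) (Yi : 'I_n -> C) (m : 'I_n -> nat) (Y : C)
  (inj : forall t : {i : 'I_n & 'I_(m i)}, hom C (Yi (tag t)) Y)
  (prj : forall t : {i : 'I_n & 'I_(m i)}, hom C Y (Yi (tag t)))
  (HYi : forall i, indecomposable (Yi i))
  (Hm : forall i, (0 < m i)%N)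
  (HYdist : forall i j, i != j -> ~ iso (Yi i) (Yi j))
  (HY : biproduct (fun t : {i : 'I_n & 'I_(m i)} => Yi (tag t)) Y inj prj) :
  (forall f : hom C X Y,
     (forall i (j : 'I_(m i)),
        I X (Yi i) (comp (prj (Tagged (fun i => 'I_(m i)) j)) f)) ->
     (forall i, quot_basis I (irr_minus_rel I) (X:=X) (Y:=Yi i) (m i)
                  (fun j => comp (prj (Tagged (fun i => 'I_(m i)) j)) f)) ->
     (forall Y' : C, indecomposable Y' ->
        quot_nonzero I (irr_minus_rel I) X Y' -> exists i, iso Y' (Yi i)) ->
     source_map I f)
  /\
  (forall g : hom C Y Z,
     (forall i (j : 'I_(m i)),
        I (Yi i) Z (comp g (inj (Tagged (fun i => 'I_(m i)) j)))) ->
     (forall i, quot_basis I (irr_plus_rel I) (X:=Yi i) (Y:=Z) (m i)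
                  (fun j => comp g (inj (Tagged (fun i => 'I_(m i)) j)))) ->
     (forall Y' : C, indecomposable Y' ->
        quot_nonzero I (irr_plus_rel I) Y' Z -> exists i, iso Y' (Yi i)) ->
     sink_map I g).
Proof.
have Yi_local i : local_end (Yi i) := indecomposable_local Hadd HKS (HYi i).
split=> [f|g g_in_I g_basis g_irr].
  apply: (source_map_of_irr_basis K C HKS I HI _ n Yi m Y inj prj Yi_local HYdist HY).
  by move=> X'; case: (HIff X').
apply: sink_map_of_op.
apply: (source_map_of_irr_basis K (opposite C) (krull_schmidt_op HKS) (op_class I)
  (is_ideal_op HI) _ n Yi m Y prj inj _ _ (biproduct_op HY) Z g g_in_I).
- by move=> X'; case: (HIff X') => _ [A [a a_approx]]; exists A, a.
- by move=> i; apply/local_end_op.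
- by move=> i j ij /iso_op; apply: HYdist; rewrite eq_sym.
- by move=> i; apply: quot_basis_op.
- move=> Y' /indecomposable_op Y'indec /quot_nonzero_op /(g_irr _ Y'indec) [i Y'i].
  by exists i; apply/iso_op/iso_sym.
Qed.
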